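(* Let $P$ be a prismatoid. Then the top and the bottom of $P$ are Minkowski equivalent.
   Context: A $d$-dimensional prism is a polytope affinely equivalent to $Q \times [0,1]$ for some $(d-1)$-dimensional polytope $Q$; its top and bottom facets are the images of $Q\times\{1\}$ and $Q \times \{0\}$. A prismatoid is a polytope whose face lattice is isomorphic to that of a prism and such that the two facets corresponding to the top and bottom facets of the prism (called the top and bottom of the prismatoid) are parallel. Two faces $F,G$ are parallel if $\mathrm{lin}(F)=\mathrm{lin}(G)$, where $\mathrm{lin}(F)$ is the linear subspace parallel to the affine hull of $F$. Two polytopes are Minkowski equivalent if they have the same normal fan. *)

From mathcomp Require Import all_boot all_order all_algebra.
From mathcomp Require Import classical_sets reals.
Set Implicit Arguments. Unset Strict Implicit. Unset Printing Implicit Defensive.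
Import Order.TTheory GRing.Theory Num.Theory.
Local Open Scope ring_scope.
Local Open Scope classical_set_scope.

Section Polytopes.
Variable R : realType.

Definition dotv (n : nat) (u v : 'rV[R]_n) : R := \sum_(i < n) u 0 i * v 0 i.

Definition is_polytope (n : nat) (P : set 'rV[R]_n) : Prop :=
  exists (k : nat) (p : 'I_k -> 'rV[R]_n),
    P = [set x | exists lam : 'I_k -> R,
                   (forall i, 0 <= lam i) /\ \sum_(i < k) lam i = 1 /\
                   x = \sum_(i < k) lam i *: p i].

(* faces: the empty set, and the maximizer sets of linear functionals
   (c = 0 gives P itself) *)
Definition is_face (n : nat) (P F : set 'rV[R]_n) : Prop :=
  F = set0 \/
  exists c : 'rV[R]_n,
    F = [set x | P x /\ forall y, P y -> dotv c y <= dotv c x].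

Definition face_lattice_iso (n1 n2 : nat) (P1 : set 'rV[R]_n1)
    (P2 : set 'rV[R]_n2) (f : set 'rV[R]_n1 -> set 'rV[R]_n2) : Prop :=
  (forall F, is_face P1 F -> is_face P2 (f F)) /\
  (forall G, is_face P2 G -> exists2 F, is_face P1 F & f F = G) /\
  (forall F G, is_face P1 F -> is_face P1 G -> (F `<=` G <-> f F `<=` f G)).

Definition prism (m : nat) (Q : set 'rV[R]_m) : set 'rV[R]_(m + 1) :=
  [set z | Q (lsubmx z) /\ 0 <= rsubmx z 0 0 <= 1].
Definition prism_bottom (m : nat) (Q : set 'rV[R]_m) : set 'rV[R]_(m + 1) :=
  [set z | Q (lsubmx z) /\ rsubmx z 0 0 = 0].
Definition prism_top (m : nat) (Q : set 'rV[R]_m) : set 'rV[R]_(m + 1) :=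
  [set z | Q (lsubmx z) /\ rsubmx z 0 0 = 1].

(* lin(F): the linear subspace parallel to the affine hull of F, i.e. the set
   of affine dependencies  sum a_i x_i  with x_i in F and sum a_i = 0 *)
Definition lin (n : nat) (F : set 'rV[R]_n) : set 'rV[R]_n :=
  [set v | exists (k : nat) (x : 'I_k -> 'rV[R]_n) (a : 'I_k -> R),
     (forall i, F (x i)) /\ \sum_(i < k) a i = 0 /\
     v = \sum_(i < k) a i *: x i].

Definition parallel (n : nat) (F G : set 'rV[R]_n) : Prop := lin F = lin G.

Definition prismatoid_with (n : nat) (P B T : set 'rV[R]_n) : Prop :=
  is_polytope P /\
  (exists (m : nat) (Q : set 'rV[R]_m) (f : set 'rV[R]_(m + 1) -> set 'rV[R]_n),
     [/\ is_polytope Q, Q !=set0, face_lattice_iso (prism Q) P f,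
         f (prism_bottom Q) = B & f (prism_top Q) = T]) /\
  parallel B T.

Definition normal_cone (n : nat) (P F : set 'rV[R]_n) : set 'rV[R]_n :=
  [set c | forall x y, F x -> P y -> dotv c y <= dotv c x].

Definition normal_fan (n : nat) (P : set 'rV[R]_n) : set (set 'rV[R]_n) :=
  [set N | exists2 F, is_face P F /\ F !=set0 & N = normal_cone P F].

Definition minkowski_equivalent (n : nat) (P1 P2 : set 'rV[R]_n) : Prop :=
  normal_fan P1 = normal_fan P2.

End Polytopes.

From mathcomp Require Import all_boot all_order all_algebra.
From mathcomp Require Import boolp classical_sets reals.
From mathcomp Require Import ring.
Set Implicit Arguments. Unset Strict Implicit. Unset Printing Implicit Defensive.
Import Order.TTheory GRing.Theory Num.Theory.
Local Open Scope ring_scope.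
Local Open Scope classical_set_scope.

(* Write T = argmax_P t for the top.  The functional t is constant on T, hence,
   T and B being parallel, also constant on B, with a strictly smaller value.
   So for any functional c, a suitable g = c + lam t takes equal maxima on T
   and on B, and the face of P maximising g cuts out exactly the c-maximal
   faces of T and of B.  Its preimage in the prism Q x [0,1] meets both the
   bottom and the top, which forces its normal to be horizontal: it is a
   vertical face, whose bottom and top slices correspond.  Transporting
   inclusions through the face lattice isomorphism, c0-maximal faces of T are
   contained in c-maximal ones exactly when the same holds in B, and this is
   the equality of normal fans. *)

Section Polytopes.
Variable R : realType.

Definition argmax n (S : set 'rV[R]_n) (c : 'rV[R]_n) : set 'rV[R]_n :=
  [set x | S x /\ forall y, S y -> dotv c y <= dotv c x].

Definition hull n k (p : 'I_k -> 'rV[R]_n) : set 'rV[R]_n :=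
  [set x | exists lam : 'I_k -> R, (forall i, 0 <= lam i) /\
     \sum_(i < k) lam i = 1 /\ x = \sum_(i < k) lam i *: p i].

Lemma dotvDl n (c d v : 'rV[R]_n) : dotv (c + d) v = dotv c v + dotv d v.
Proof. by rewrite /dotv -big_split; apply: eq_bigr => i _; rewrite mxE mulrDl. Qed.

Lemma dotvZl n a (c v : 'rV[R]_n) : dotv (a *: c) v = a * dotv c v.
Proof. by rewrite /dotv mulr_sumr; apply: eq_bigr => i _; rewrite mxE mulrA. Qed.

Lemma dotv0l n (v : 'rV[R]_n) : dotv 0 v = 0.
Proof. by rewrite /dotv big1 // => i _; rewrite mxE mul0r. Qed.

Lemma dotvBr n (c v w : 'rV[R]_n) : dotv c (v - w) = dotv c v - dotv c w.
Proof. by rewrite /dotv -sumrB; apply: eq_bigr => i _; rewrite !mxE mulrBr. Qed.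

Lemma dotv_sumZr n k (c : 'rV[R]_n) (a : 'I_k -> R) (x : 'I_k -> 'rV[R]_n) :
  dotv c (\sum_(i < k) a i *: x i) = \sum_(i < k) a i * dotv c (x i).
Proof.
rewrite /dotv (eq_bigr (fun j => \sum_(i < k) c 0 j * (a i * x i 0 j))).
  by rewrite exchange_big; apply: eq_bigr => i _; rewrite mulr_sumr;
     apply: eq_bigr => j _; rewrite mulrCA.
by move=> j _; rewrite summxE mulr_sumr; apply: eq_bigr => i _; rewrite mxE.
Qed.

Lemma dotv_hsubmx m (d z : 'rV[R]_(m + 1)) :
  dotv d z = dotv (lsubmx d) (lsubmx z) + rsubmx d 0 0 * rsubmx z 0 0.
Proof.
rewrite /dotv big_split_ord big_ord1 /= !mxE; congr (_ + _).
by apply: eq_bigr => i _; rewrite !mxE.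
Qed.

Lemma is_polytopeE n (P : set 'rV[R]_n) :
  is_polytope P = exists k (p : 'I_k -> 'rV[R]_n), P = hull p.
Proof. by []. Qed.

Lemma is_faceE n (P F : set 'rV[R]_n) :
  is_face P F = (F = set0 \/ exists c, F = argmax P c).
Proof. by []. Qed.

Lemma argmax_sub n (S : set 'rV[R]_n) c : argmax S c `<=` S.
Proof. by move=> x []. Qed.

Lemma argmax0 n (S : set 'rV[R]_n) : argmax S 0 = S.
Proof. by apply/seteqP; split=> [x [] //|x Sx]; split=> // y _; rewrite !dotv0l. Qed.

Lemma argmax_le n (S : set 'rV[R]_n) c x y :
  argmax S c x -> S y -> dotv c x <= dotv c y -> argmax S c y.
Proof.
by move=> [_ xmax] Sy le_xy; split=> // z Sz; apply: le_trans (xmax _ Sz) le_xy.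
Qed.

Lemma argmax_shift n (P S : set 'rV[R]_n) c g r y u :
  S `<=` P -> (forall x, S x -> dotv g x = dotv c x + r) ->
  argmax S c y -> (argmax P g `&` S) u -> argmax P g y.
Proof.
move=> SP gS [Sy ymax] [umax Su]; apply: (argmax_le umax (SP _ Sy)).
by rewrite !gS // lerD2r ymax.
Qed.

Lemma argmax_setI_shift n (P S : set 'rV[R]_n) c g r y :
  S `<=` P -> (forall x, S x -> dotv g x = dotv c x + r) ->
  argmax S c y -> argmax P g y -> argmax P g `&` S = argmax S c.
Proof.
move=> SP gS [Sy ymax] [Py gmax]; apply/seteqP; split=> x.
  move=> [[Px xmax] Sx]; split=> // z Sz.
  by rewrite -(lerD2r r) -!gS //; apply/xmax/SP.
move=> [Sx xmax]; split=> //; split=> [|z Pz]; first exact: SP.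
by apply: le_trans (gmax _ Pz) _; rewrite !gS // lerD2r xmax.
Qed.

Lemma face_sub n (P F : set 'rV[R]_n) : is_face P F -> F `<=` P.
Proof. by rewrite is_faceE => -[-> //|[c ->]]; apply: argmax_sub. Qed.

Lemma face_argmax n (P : set 'rV[R]_n) c : is_face P (argmax P c).
Proof. by right; exists c. Qed.

Lemma face_full n (P : set 'rV[R]_n) : is_face P P.
Proof. by rewrite -{2}(argmax0 P); apply: face_argmax. Qed.

Lemma hull_gen n k (p : 'I_k -> 'rV[R]_n) j : hull p (p j).
Proof.
exists (fun i => (i == j)%:R); split=> [i|]; first exact: ler0n.
split; first by rewrite (bigD1 j) //= eqxx big1 ?addr0 // => i /negbTE ->.
by rewrite (bigD1 j) //= eqxx scale1r big1 ?addr0 // => i /negbTE ->; rewrite scale0r.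
Qed.

Lemma argmax_hull_support n k (p : 'I_k -> 'rV[R]_n) t x (mu : 'I_k -> R) :
  argmax (hull p) t x -> (forall i, 0 <= mu i) -> \sum_(i < k) mu i = 1 ->
  x = \sum_(i < k) mu i *: p i -> forall i, mu i != 0 -> argmax (hull p) t (p i).
Proof.
move=> xmax mu_ge0 mu_sum1 xE i mu_i; apply: (argmax_le xmax (hull_gen p i)).
suff -> : dotv t x = dotv t (p i) by [].
have gap_ge0 j : 0 <= mu j * (dotv t x - dotv t (p j)).
  by rewrite mulr_ge0 // subr_ge0; apply: xmax.2; apply: hull_gen.
have gap0 : \sum_(j < k) mu j * (dotv t x - dotv t (p j)) = 0.
  under eq_bigr do rewrite mulrBr.
  by rewrite sumrB -mulr_suml mu_sum1 mul1r -dotv_sumZr -xE subrr.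
have /eqP := @psumr_eq0P _ _ _ _ (fun j _ => gap_ge0 j) gap0 i isT.
by rewrite mulf_eq0 (negbTE mu_i) subr_eq0 => /eqP.
Qed.

Lemma argmax_face_neq0 n (P F : set 'rV[R]_n) c :
  is_polytope P -> is_face P F -> F !=set0 -> argmax F c !=set0.
Proof.
rewrite is_polytopeE is_faceE => -[k [p ->]] [-> [] //|[t ->]] [x0 x0max].
have [mu0 [mu0_ge0 [mu0_sum1 x0E]]] := x0max.1.
have /existsP[i0 mu0_i0] : [exists i, mu0 i != 0].
  rewrite -negb_forall; apply/negP => /forallP mu0_0; move: mu0_sum1.
  by rewrite big1 => [/esym/eqP|i _]; [rewrite oner_eq0 | apply/eqP/mu0_0].
have /asboolP F_i0 := argmax_hull_support x0max mu0_ge0 mu0_sum1 x0E mu0_i0.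
have [j /asboolP jmax j_ge] := @arg_maxP _ _ _ i0
  (fun i => `[< argmax (hull p) t (p i) >]) (fun i => dotv c (p i)) F_i0.
exists (p j); split=> // x xmax; have [[mu [mu_ge0 [mu_sum1 xE]]] _] := xmax.
rewrite xE dotv_sumZr -[dotv c (p j)]mul1r -mu_sum1 mulr_suml.
apply: ler_sum => i _; have [->|mu_i] := eqVneq (mu i) 0; first by rewrite !mul0r.
rewrite ler_wpM2l //; apply/j_ge/asboolP.
exact: argmax_hull_support xmax mu_ge0 mu_sum1 xE i mu_i.
Qed.

Lemma face_setI n (P F G : set 'rV[R]_n) :
  is_face P F -> is_face P G -> is_face P (F `&` G).
Proof.
rewrite !is_faceE => -[->|[c1 ->]]; first by left; rewrite set0I.
move=> [->|[c2 ->]]; first by left; rewrite setI0.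
have [[z [[Pz z1max] [_ z2max]]]|FG0] :=
  pselect ((argmax P c1 `&` argmax P c2) !=set0); last first.
  by left; apply/seteqP; split=> // x FGx; apply: FG0; exists x.
right; exists (c1 + c2); apply/seteqP; split=> x.
  move=> [[Px x1max] [_ x2max]]; split=> // y Py.
  by rewrite !dotvDl lerD ?x1max ?x2max.
move=> [Px xmax]; have := xmax _ Pz; rewrite !dotvDl => le_zx.
have e1 : dotv c1 x = dotv c1 z.
  apply/le_anti; rewrite z1max //=; rewrite -(lerD2r (dotv c2 x)).
  by apply: le_trans le_zx; rewrite lerD2l z2max.
have e2 : dotv c2 x = dotv c2 z.
  apply/le_anti; rewrite z2max //=; rewrite -(lerD2l (dotv c1 x)).
  by apply: le_trans le_zx; rewrite lerD2r z1max.
by split; split=> // y Py; [rewrite e1 z1max | rewrite e2 z2max].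
Qed.

Lemma lin_subr n (F : set 'rV[R]_n) x y : F x -> F y -> lin F (x - y).
Proof.
move=> Fx Fy; exists 2, (fun i : 'I_2 => if i == ord0 then x else y),
  (fun i : 'I_2 => if i == ord0 then 1 else -1).
split; first by move=> i; case: ifP.
split; first by rewrite !big_ord_recl big_ord0 /= addr0 subrr.
by rewrite !big_ord_recl big_ord0 /= scale1r scaleN1r addr0.
Qed.

Lemma dotv_lin_level n (F : set 'rV[R]_n) t r v :
  (forall x, F x -> dotv t x = r) -> lin F v -> dotv t v = 0.
Proof.
move=> tF [k [x [a [Fx [a_sum0 ->]]]]].
rewrite dotv_sumZr (eq_bigr (fun i => a i * r)) => [|i _]; last by rewrite tF.
by rewrite -mulr_suml a_sum0 mul0r.
Qed.

Lemma parallel_level n (F G : set 'rV[R]_n) t r x y :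
  parallel F G -> (forall z, G z -> dotv t z = r) -> F x -> F y ->
  dotv t x = dotv t y.
Proof.
move=> parFG tG Fx Fy; apply/eqP; rewrite -subr_eq0 -dotvBr; apply/eqP.
by apply: (dotv_lin_level tG); rewrite -parFG; apply: lin_subr.
Qed.

Lemma normal_cone_argmax n (S : set 'rV[R]_n) c0 :
  normal_cone S (argmax S c0) = [set c | argmax S c0 `<=` argmax S c].
Proof.
apply/seteqP; split=> c /=.
  by move=> c_max x xmax; split=> [|y]; [apply: xmax.1 | apply: c_max].
by move=> sub x y /sub[_ xmax]; apply: xmax.
Qed.

Lemma normal_fan_sub n (S1 S2 : set 'rV[R]_n) :
  (forall c, argmax S2 c !=set0) ->
  (forall c0 c, argmax S1 c0 `<=` argmax S1 c <-> argmax S2 c0 `<=` argmax S2 c) ->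
  normal_fan S1 `<=` normal_fan S2.
Proof.
move=> S2_neq0 sub_iff N [F [faceF F_neq0] ->]; move: faceF F_neq0.
rewrite is_faceE => -[-> [] //|[c0 ->]] _.
exists (argmax S2 c0); first by split; [apply: face_argmax | apply: S2_neq0].
by rewrite !normal_cone_argmax; apply/seteqP; split=> c /sub_iff.
Qed.

Section FaceLatticeIso.
Variables (n1 n2 : nat) (P1 : set 'rV[R]_n1) (P2 : set 'rV[R]_n2).
Variable f : set 'rV[R]_n1 -> set 'rV[R]_n2.
Hypothesis iso : face_lattice_iso P1 P2 f.

Lemma iso_face F : is_face P1 F -> is_face P2 (f F).
Proof. exact: iso.1. Qed.

Lemma iso_sub F G : is_face P1 F -> is_face P1 G -> F `<=` G <-> f F `<=` f G.
Proof. exact: iso.2.2. Qed.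

Lemma iso_set0 : f set0 = set0.
Proof.
have [F faceF fF] := iso.2.1 set0 (or_introl erefl).
rewrite -fF; apply/seteqP; split; last by rewrite fF.
by apply/(iso_sub (or_introl erefl) faceF).
Qed.

Lemma iso_setI F G : is_face P1 F -> is_face P1 G -> f (F `&` G) = f F `&` f G.
Proof.
move=> faceF faceG; have faceFG := face_setI faceF faceG.
apply/seteqP; split.
  by rewrite subsetI; split; [apply/(iso_sub faceFG faceF); apply: subIsetl
                             | apply/(iso_sub faceFG faceG); apply: subIsetr].
have [H faceH fH] := iso.2.1 _ (face_setI (iso_face faceF) (iso_face faceG)).
rewrite -fH; apply/(iso_sub faceH faceFG); rewrite subsetI; split.
  by apply/(iso_sub faceH faceF); rewrite fH; apply: subIsetl.
by apply/(iso_sub faceH faceG); rewrite fH; apply: subIsetr.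
Qed.

Lemma iso_neq0 F : is_face P1 F -> f F !=set0 <-> F !=set0.
Proof.
move=> faceF; split=> [[x fFx]|[x Fx]]; apply: contrapT => F0.
  suff F_eq0 : F = set0 by move: fFx; rewrite F_eq0 iso_set0.
  by apply/seteqP; split=> // y Fy; apply: F0; exists y.
have /(iso_sub faceF (or_introl erefl)) : f F `<=` f set0.
  by rewrite iso_set0 => y fFy; apply: F0; exists y.
by move/(_ x Fx).
Qed.

End FaceLatticeIso.

Section Prism.
Variables (m : nat) (Q : set 'rV[R]_m).

Definition pt (q : 'rV[R]_m) (r : R) : 'rV[R]_(m + 1) := row_mx q (const_mx r).

Lemma lsubmx_pt q r : lsubmx (pt q r) = q. Proof. exact: row_mxKl. Qed.

Lemma rsubmx_pt q r : rsubmx (pt q r) 0 0 = r. Proof. by rewrite row_mxKr mxE. Qed.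

Lemma ptK z : pt (lsubmx z) (rsubmx z 0 0) = z.
Proof.
rewrite /pt -[RHS](hsubmxK z); congr row_mx.
by apply/matrixP => i j; rewrite !mxE (ord1 i) (ord1 j).
Qed.

Lemma dotv_pt d q r : dotv d (pt q r) = dotv (lsubmx d) q + rsubmx d 0 0 * r.
Proof. by rewrite dotv_hsubmx lsubmx_pt rsubmx_pt. Qed.

Lemma prism_ptE q r : prism Q (pt q r) <-> Q q /\ 0 <= r <= 1.
Proof. by rewrite /prism /= lsubmx_pt rsubmx_pt. Qed.

Lemma prism_bottom_ptE q r : prism_bottom Q (pt q r) <-> Q q /\ r = 0.
Proof. by rewrite /prism_bottom /= lsubmx_pt rsubmx_pt. Qed.

Lemma prism_top_ptE q r : prism_top Q (pt q r) <-> Q q /\ r = 1.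
Proof. by rewrite /prism_top /= lsubmx_pt rsubmx_pt. Qed.

Lemma dotv_height s z : dotv (pt 0 s) z = s * rsubmx z 0 0.
Proof. by rewrite dotv_hsubmx lsubmx_pt rsubmx_pt dotv0l add0r. Qed.

Lemma prism_face_bottom : is_face (prism Q) (prism_bottom Q).
Proof.
right; exists (pt 0 (-1)); apply/seteqP; split=> z.
  move=> [Qz z0]; split; first by split; rewrite // z0 lexx ler01.
  by move=> y [_ /andP[y_ge0 _]]; rewrite !dotv_height z0 mulr0 mulN1r oppr_le0.
move=> [[Qz /andP[z_ge0 _]] zmax]; split=> //; apply/le_anti; rewrite z_ge0 andbT.
have := zmax (pt (lsubmx z) 0); rewrite !dotv_height rsubmx_pt mulr0 mulN1r oppr_ge0.
by apply; apply/prism_ptE; rewrite lexx ler01.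
Qed.

Lemma prism_face_top : is_face (prism Q) (prism_top Q).
Proof.
right; exists (pt 0 1); apply/seteqP; split=> z.
  move=> [Qz z1]; split; first by split; rewrite // z1 lexx ler01.
  by move=> y [_ /andP[_ y_le1]]; rewrite !dotv_height z1 !mul1r.
move=> [[Qz /andP[_ z_le1]] zmax]; split=> //; apply/le_anti; rewrite z_le1 /=.
have := zmax (pt (lsubmx z) 1); rewrite !dotv_height rsubmx_pt !mul1r.
by apply; apply/prism_ptE; rewrite lexx ler01.
Qed.

Lemma prism_bottom_neq0 : Q !=set0 -> prism_bottom Q !=set0.
Proof. by move=> [q Qq]; exists (pt q 0); apply/prism_bottom_ptE. Qed.

Lemma prism_top_neq0 : Q !=set0 -> prism_top Q !=set0.
Proof. by move=> [q Qq]; exists (pt q 1); apply/prism_top_ptE. Qed.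

Lemma prism_bottomI_top : prism_bottom Q `&` prism_top Q = set0.
Proof.
apply/seteqP; split=> // z [[_ z0] [_]]; rewrite z0 => /eqP.
by rewrite eq_sym oner_eq0.
Qed.

Lemma prism_face_meets X : is_face (prism Q) X -> X !=set0 ->
  X `&` prism_bottom Q !=set0 \/ X `&` prism_top Q !=set0.
Proof.
rewrite is_faceE => -[-> [] //|[d ->]] [z zmax].
have [[Qz /andP[z_ge0 z_le1]] _] := zmax.
have move_to r : 0 <= r <= 1 -> rsubmx d 0 0 * rsubmx z 0 0 <= rsubmx d 0 0 * r ->
    argmax (prism Q) d (pt (lsubmx z) r).
  move=> r01 le_zr; apply: (argmax_le zmax); first by apply/prism_ptE.
  by rewrite -[in X in X <= _](ptK z) !dotv_pt lerD2l.
have [d_ge0|d_lt0] := leP 0 (rsubmx d 0 0).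
  right; exists (pt (lsubmx z) 1); split; last by apply/prism_top_ptE.
  by apply: move_to; rewrite ?lexx ?ler01 // ler_wpM2l.
left; exists (pt (lsubmx z) 0); split; last by apply/prism_bottom_ptE.
by apply: move_to; rewrite ?lexx ?ler01 // mulr0 nmulr_rle0.
Qed.

Lemma prism_face_vertical X : is_face (prism Q) X ->
  X `&` prism_bottom Q !=set0 -> X `&` prism_top Q !=set0 ->
  forall q, X (pt q 0) <-> X (pt q 1).
Proof.
rewrite is_faceE => -[-> [? []] //|[d ->]].
move=> [z0 [[_ z0max] [Qz0 z0_0]]] [z1 [[_ z1max] [Qz1 z1_1]]].
have d_r0 : rsubmx d 0 0 = 0.
  apply/le_anti/andP; split.
    have := z0max (pt (lsubmx z0) 1).
    rewrite -[in X in _ <= X](ptK z0) !dotv_pt z0_0 mulr1 mulr0 addr0 gerDl.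
    by apply; apply/prism_ptE; rewrite lexx ler01.
  have := z1max (pt (lsubmx z1) 0).
  rewrite -[in X in _ <= X](ptK z1) !dotv_pt z1_1 mulr1 mulr0 addr0 lerDl.
  by apply; apply/prism_ptE; rewrite lexx ler01.
by move=> q; rewrite /argmax /= !dotv_pt d_r0 !mul0r !prism_ptE !lexx ler01.
Qed.

Lemma prism_face_sub X Y :
  is_face (prism Q) X -> X `&` prism_bottom Q !=set0 -> X `&` prism_top Q !=set0 ->
  is_face (prism Q) Y -> Y `&` prism_bottom Q !=set0 -> Y `&` prism_top Q !=set0 ->
  X `&` prism_top Q `<=` Y `&` prism_top Q <->
  X `&` prism_bottom Q `<=` Y `&` prism_bottom Q.
Proof.
move=> faceX XB XT faceY YB YT.
have Xv := prism_face_vertical faceX XB XT; have Yv := prism_face_vertical faceY YB YT.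
split=> XY z [Xz zQ]; split=> //; move: Xz zQ; rewrite -(ptK z).
  move=> /[swap] /prism_bottom_ptE[Qz ->] /Xv Xz1.
  by apply/Yv; case: (XY (pt (lsubmx z) 1)) => //; split=> //; apply/prism_top_ptE.
move=> /[swap] /prism_top_ptE[Qz ->] /Xv Xz0.
by apply/Yv; case: (XY (pt (lsubmx z) 0)) => //; split=> //; apply/prism_bottom_ptE.
Qed.

End Prism.

Section Prismatoid.
Variables (n m : nat) (P B T : set 'rV[R]_n) (Q : set 'rV[R]_m).
Variable f : set 'rV[R]_(m + 1) -> set 'rV[R]_n.
Hypotheses (polyP : is_polytope P) (Q_neq0 : Q !=set0).
Hypotheses (iso : face_lattice_iso (prism Q) P f).
Hypotheses (fB : f (prism_bottom Q) = B) (fT : f (prism_top Q) = T).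
Hypothesis parBT : parallel B T.

Lemma prismatoid_face_bottom : is_face P B.
Proof. by rewrite -fB; apply/(iso_face iso)/prism_face_bottom. Qed.

Lemma prismatoid_face_top : is_face P T.
Proof. by rewrite -fT; apply/(iso_face iso)/prism_face_top. Qed.

Lemma prismatoid_bottom_neq0 : B !=set0.
Proof.
by rewrite -fB; apply/(iso_neq0 iso (prism_face_bottom Q))/prism_bottom_neq0.
Qed.

Lemma prismatoid_top_neq0 : T !=set0.
Proof. by rewrite -fT; apply/(iso_neq0 iso (prism_face_top Q))/prism_top_neq0. Qed.

Lemma prismatoid_bottomI_top : B `&` T = set0.
Proof.
by rewrite -fB -fT -(iso_setI iso) ?prism_bottomI_top ?(iso_set0 iso) //;
  [apply: prism_face_bottom | apply: prism_face_top].
Qed.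

Lemma argmax_meets_bottom_or_top g :
  argmax P g `&` B !=set0 \/ argmax P g `&` T !=set0.
Proof.
have [X faceX fX] := iso.2.1 _ (face_argmax P g).
have faceXB := face_setI faceX (prism_face_bottom Q).
have faceXT := face_setI faceX (prism_face_top Q).
have P_neq0 : P !=set0.
  have [x Tx] := prismatoid_top_neq0.
  by exists x; apply: (face_sub prismatoid_face_top).
have X_neq0 : X !=set0.
  apply/(iso_neq0 iso faceX); rewrite fX.
  exact: argmax_face_neq0 polyP (face_full P) P_neq0.
rewrite -fX -fB -fT -!(iso_setI iso) //;
  try exact: prism_face_bottom; try exact: prism_face_top.
by case: (prism_face_meets faceX X_neq0) => XQ; [left|right]; apply/(iso_neq0 iso).
Qed.

Section TopFunctional.
Variable t : 'rV[R]_n.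
Hypothesis Tt : T = argmax P t.

Lemma top_level x y : T x -> T y -> dotv t x = dotv t y.
Proof. by rewrite Tt => -[Px xmax] [Py ymax]; apply/le_anti; rewrite xmax // ymax. Qed.

Lemma bottom_level x y : B x -> B y -> dotv t x = dotv t y.
Proof.
have [z Tz] := prismatoid_top_neq0.
by apply: (parallel_level parBT) => x' Tx'; apply: (top_level Tx' Tz).
Qed.

Lemma bottom_lt_top x y : B x -> T y -> dotv t x < dotv t y.
Proof.
move=> Bx Ty; have Px := face_sub prismatoid_face_bottom Bx.
have ymax : argmax P t y by rewrite -Tt.
rewrite lt_neqAle ymax.2 // andbT; apply/eqP => txy.
suff : (B `&` T) x by rewrite prismatoid_bottomI_top.
by split=> //; rewrite Tt; apply: (argmax_le ymax Px); rewrite txy.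
Qed.

Lemma levelling_functional c :
  exists g, argmax P g `&` T = argmax T c /\ argmax P g `&` B = argmax B c.
Proof.
have [yT yTmax] := argmax_face_neq0 c polyP prismatoid_face_top prismatoid_top_neq0.
have [yB yBmax] := argmax_face_neq0 c polyP prismatoid_face_bottom prismatoid_bottom_neq0.
have [TyT _] := yTmax; have [ByB _] := yBmax.
pose lam := (dotv c yB - dotv c yT) / (dotv t yT - dotv t yB).
pose g := c + lam *: t.
have gT x : T x -> dotv g x = dotv c x + lam * dotv t yT.
  by move=> Tx; rewrite dotvDl dotvZl (top_level Tx TyT).
have gB x : B x -> dotv g x = dotv c x + lam * dotv t yB.
  by move=> Bx; rewrite dotvDl dotvZl (bottom_level Bx ByB).
have gTB : dotv g yT = dotv g yB.
  have tTB : dotv t yT - dotv t yB != 0 by rewrite subr_eq0 gt_eqF ?bottom_lt_top.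
  by rewrite gT // gB // /lam; field.
have TP := face_sub prismatoid_face_top; have BP := face_sub prismatoid_face_bottom.
have [yTg yBg] : argmax P g yT /\ argmax P g yB.
  case: (argmax_meets_bottom_or_top g) => [[u uB]|[u uT]].
    have yBg := argmax_shift BP gB yBmax uB.
    by split=> //; apply: (argmax_le yBg (TP _ TyT)); rewrite gTB.
  have yTg := argmax_shift TP gT yTmax uT.
  by split=> //; apply: (argmax_le yTg (BP _ ByB)); rewrite gTB.
exists g; split; first exact: argmax_setI_shift gT yTmax yTg.
exact: argmax_setI_shift gB yBmax yBg.
Qed.

End TopFunctional.

Lemma common_prism_face c : exists X, [/\ is_face (prism Q) X,
  X `&` prism_bottom Q !=set0, X `&` prism_top Q !=set0,
  argmax T c = f (X `&` prism_top Q) & argmax B c = f (X `&` prism_bottom Q)].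
Proof.
have [t Tt] : exists t, T = argmax P t.
  by case: prismatoid_face_top => [T0|//]; have [x] := prismatoid_top_neq0; rewrite T0.
have [g [gT gB]] := levelling_functional Tt c.
have [X faceX fX] := iso.2.1 _ (face_argmax P g).
have faceXB := face_setI faceX (prism_face_bottom Q).
have faceXT := face_setI faceX (prism_face_top Q).
have eT : argmax T c = f (X `&` prism_top Q).
  by rewrite (iso_setI iso) ?fX ?fT //; apply: prism_face_top.
have eB : argmax B c = f (X `&` prism_bottom Q).
  by rewrite (iso_setI iso) ?fX ?fB //; apply: prism_face_bottom.
exists X; split=> //.
  apply/(iso_neq0 iso faceXB); rewrite -eB.
  exact: argmax_face_neq0 polyP prismatoid_face_bottom prismatoid_bottom_neq0.
apply/(iso_neq0 iso faceXT); rewrite -eT.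
exact: argmax_face_neq0 polyP prismatoid_face_top prismatoid_top_neq0.
Qed.

Lemma prismatoid_argmax_sub c0 c :
  argmax T c0 `<=` argmax T c <-> argmax B c0 `<=` argmax B c.
Proof.
have [X0 [faceX0 X0B X0T -> ->]] := common_prism_face c0.
have [X [faceX XB XT -> ->]] := common_prism_face c.
have faceB Y : is_face (prism Q) Y -> is_face (prism Q) (Y `&` prism_bottom Q).
  by move=> faceY; apply: face_setI faceY (prism_face_bottom Q).
have faceT Y : is_face (prism Q) Y -> is_face (prism Q) (Y `&` prism_top Q).
  by move=> faceY; apply: face_setI faceY (prism_face_top Q).
split=> sub.
  apply/(iso_sub iso (faceB _ faceX0) (faceB _ faceX)).
  apply/(prism_face_sub faceX0 X0B X0T faceX XB XT).
  by apply/(iso_sub iso (faceT _ faceX0) (faceT _ faceX)).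
apply/(iso_sub iso (faceT _ faceX0) (faceT _ faceX)).
apply/(prism_face_sub faceX0 X0B X0T faceX XB XT).
by apply/(iso_sub iso (faceB _ faceX0) (faceB _ faceX)).
Qed.

Lemma prismatoid_normal_fan : normal_fan T = normal_fan B.
Proof.
apply/seteqP; split; apply: normal_fan_sub => [c|c0 c].
- exact: argmax_face_neq0 polyP prismatoid_face_bottom prismatoid_bottom_neq0.
- exact: prismatoid_argmax_sub.
- exact: argmax_face_neq0 polyP prismatoid_face_top prismatoid_top_neq0.
- exact: iff_sym (prismatoid_argmax_sub c0 c).
Qed.

End Prismatoid.

End Polytopes.

Theorem lemma4p1 (R : realType) (n : nat) (P B T : set 'rV[R]_n) :
  prismatoid_with P B T -> minkowski_equivalent T B.
Proof.
move=> [polyP [[m [Q [f [_ Q_neq0 iso fB fT]]]] parBT]].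
exact: prismatoid_normal_fan polyP Q_neq0 iso fB fT parBT.
Qed.
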